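(* Let $E$ be a normed space over $\mathbb{K}\in\{\mathbb{R},\mathbb{C}\}$, let $n\in\{1,2\}$, and let $P:E\to\mathbb{K}$ be an $n$-homogeneous polynomial (not assumed continuous). Then $P$ is continuous if and only if $P(C)$ is connected for every connected set $C\subset E$.
   Context: A map $P:E\to\mathbb{K}$ is an $n$-homogeneous polynomial if there is a symmetric $n$-linear mapping $L:E^n\to\mathbb{K}$ (not necessarily continuous) with $P(x)=L(x,\ldots,x)$ for all $x\in E$. *)

From mathcomp Require Import all_boot all_order all_algebra all_fingroup.
From mathcomp Require Import all_classical all_reals all_analysis.
From mathcomp Require Export complex.
Set Implicit Arguments. Unset Strict Implicit. Unset Printing Implicit Defensive.
Import GRing.Theory Num.Theory.
Local Open Scope ring_scope.

Definition upd (E : Type) (n : nat) (x : 'I_n -> E) (i : 'I_n) (u : E) : 'I_n -> E :=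
  fun j => if j == i then u else x j.

Definition multilinear (K : pzRingType) (E : lmodType K) (n : nat)
  (L : ('I_n -> E) -> K) : Prop :=
  forall (i : 'I_n) (x : 'I_n -> E) (a : K) (u v : E),
    L (upd x i (a *: u + v)) = a * L (upd x i u) + L (upd x i v).

Definition symmetric_form (E K : Type) (n : nat) (L : ('I_n -> E) -> K) : Prop :=
  forall (s : 'S_n) (x : 'I_n -> E), L (fun j => x (s j)) = L x.

Definition homogeneous_polynomial (K : pzRingType) (E : lmodType K) (n : nat)
  (P : E -> K) : Prop :=
  exists L : ('I_n -> E) -> K,
    [/\ multilinear L, symmetric_form L & forall x : E, P x = L (fun _ => x)].

From HB Require Import structures.
From mathcomp Require Import all_boot all_order all_algebra all_fingroup.
From mathcomp Require Import all_classical all_reals all_analysis.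
From mathcomp Require Import complex.
From mathcomp Require Import ring lra.
Set Implicit Arguments.
Unset Strict Implicit.
Unset Printing Implicit Defensive.

Import Order.TTheory GRing.Theory Num.Theory.
Import numFieldNormedType.Exports.
Local Open Scope classical_set_scope.
Local Open Scope ring_scope.

(* A linear or quadratic form that is bounded on the unit ball is continuous,
   so a discontinuous P takes arbitrarily large values there.  Rotating the
   point by a unit (|v|/v for linear forms, a square root of |v|/v for complex
   quadratic ones; real quadratic ones may need P replaced by -P) and rescaling,
   P takes values >= 2 at points y arbitrarily close to 0.  Fix one such point z.
   On the segment from z to y the value of P stays of modulus >= 1, provided,
   in the quadratic case, y is replaced by -y when the cross term B(y, z) has
   negative real part.  The union C of these segments is connected and has 0 in
   its closure, so C + {0} is connected, while its image is {0} together with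
   values of modulus >= 1. *)

Lemma connected_image_of_continuous (T U : topologicalType) (f : T -> U) :
  continuous f -> forall C : set T, connected C -> connected (f @` C).
Proof.
by move=> fc C cC; apply: connected_continuous_connected => //; exact: continuous_subspaceT.
Qed.

Lemma connected_subset_closure (T : topologicalType) (A B : set T) :
  connected A -> A `<=` B -> B `<=` closure A -> connected B.
Proof.
move=> cA AB BclA; apply/connectedP => E [E0 BE [sE01 sE10]].
have AE : A `<=` E false `|` E true by rewrite -BE.
have [b AEb] : exists b, A `<=` E b.
  by case: (connected_subset (conj sE01 sE10) AE cA); [exists false|exists true].
have [x Ex] := E0 (~~ b).
have EclE : closure (E b) x.
  apply: (closureS AEb); apply: BclA; rewrite BE.
  by case: b {AEb} Ex => ?; [left|right].
case: b {AEb} Ex EclE => Ex EclE.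
- by move: sE10; apply/eqP/set0P; exists x.
- by move: sE01; apply/eqP/set0P; exists x.
Qed.

Lemma not_connected_zero_far (K : numFieldType) (S : set K^o) :
  S 0 -> (exists2 v, S v & v != 0) -> (forall v, S v -> v != 0 -> 1 <= `|v|) ->
  ~ connected S.
Proof.
move=> S0 [v Sv v0] Sfar; apply/connectedPn.
exists (fun b => if b then S `\` [set 0] else [set 0]); split.
- by case; [exists v; split => // /eqP; rewrite (negbTE v0)|exists 0].
- apply/seteqP; split => x /=; last by case=> [->|[]].
  by have [->|x0] := eqVneq x 0; [left|right; split => // /eqP; rewrite (negbTE x0)].
have Snear0 x : S x -> x != 0 -> ~ `|x| < 1.
  by move=> Sx x0 x1; have := le_lt_trans (Sfar x Sx x0) x1; rewrite ltxx.
split; apply/seteqP; split => // x.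
- move=> [clx [Sx /eqP x0]]; apply: (Snear0 x Sx x0).
  have [_ [/= -> ]] := clx _ (nbhsx_ballx x 1 ltr01).
  by rewrite -ball_normE /= subr0.
- move=> [/= -> cl0]; have [y [[Sy /eqP y0]]] := cl0 _ (nbhsx_ballx 0 1 ltr01).
  by rewrite -ball_normE /= sub0r normrN; exact: Snear0.
Qed.

Section HomogeneousPolynomials.
Variables (K : nzRingType) (E : lmodType K).

Lemma homogeneous_polynomial1_linear (P : E -> K^o) :
  homogeneous_polynomial 1 P -> exists f : {linear E -> K^o}, P = f.
Proof.
move=> [L [Llin _ PL]].
have Plin : linear P.
  move=> a u v; rewrite !PL.
  have diag1 (w : E) : (fun _ : 'I_1 => w) = upd (fun _ => 0) ord0 w.
    by apply: funext => j; rewrite /upd (ord1 j) eqxx.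
  by rewrite (diag1 (a *: u + v)) (diag1 u) (diag1 v) Llin.
pose f : {linear E -> K^o} := HB.pack P (GRing.isLinear.Build K E K^o *:%R P Plin).
by exists f.
Qed.

Lemma homogeneous_polynomial2_symmetric (P : E -> K) :
  homogeneous_polynomial 2 P -> exists B : {symmetric E}, forall x, P x = B x x.
Proof.
move=> [L [Llin Lsym PL]].
pose B (x y : E) := L (fun j : 'I_2 => if j == ord0 then x else y).
have BC x y : B x y = B y x.
  rewrite /B -(Lsym (tperm ord0 ord_max)); congr L; apply: funext => j.
  by case: j => [[|[|//]]] /= lt; rewrite !permE.
have Blin : bilinear_for *%R (idfun \; *%R) B.
  have Bl w : linear_for *%R (B^~ w).
    move=> a u v; rewrite /B.
    have upd0 (t : E) : (fun j : 'I_2 => if j == ord0 then t else w) =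
        upd (fun j : 'I_2 => if j == ord0 then 0 else w) ord0 t.
      by apply: funext => j; rewrite /upd; case: ifP.
    by rewrite (upd0 (a *: u + v)) (upd0 u) (upd0 v) Llin.
  by split=> // w a u v /=; rewrite !(BC w) Bl.
have Bherm x y : B x y = (-1) ^+ false * idfun (B y x) by rewrite mul1r BC.
pose sB : {symmetric E} := HB.pack B
  (bilinear_isBilinear.Build K E E K *%R (idfun \; *%R) B Blin)
  (isHermitianSesquilinear.Build K E false idfun B Bherm).
exists sB.
by move=> x; rewrite PL; congr L; apply: funext => j; case: ifP.
Qed.

End HomogeneousPolynomials.

Section SymmetricForms.
Variables (K : comNzRingType) (E : lmodType K) (B : {symmetric E}).

Lemma symmetric_formC u v : B u v = B v u.
Proof. by rewrite hermC /= mul1r. Qed.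

Lemma symmetric_form_diagZ a u : B (a *: u) (a *: u) = a ^+ 2 * B u u.
Proof. by rewrite linearZl_LR linearZr_LR /= mulrA -expr2. Qed.

Lemma symmetric_form_combination a b u v :
  B (a *: u + b *: v) (a *: u + b *: v) =
  a ^+ 2 * B u u + 2 * (a * b) * B u v + b ^+ 2 * B v v.
Proof.
rewrite linearDl !linearDr !linearZl_LR !linearZr_LR /= (symmetric_formC v u).
ring.
Qed.

Lemma symmetric_form_polarization u v :
  B (u + v) (u + v) - B (u - v) (u - v) = 4 * B u v.
Proof. rewrite linearDl linearBl !linearDr !linearNr /= (symmetric_formC v u); ring. Qed.

Lemma symmetric_form_diag_sub x y : B x x - B y y = B (x - y) (x + y).
Proof. rewrite linearBl !linearDr /= (symmetric_formC y x); ring. Qed.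

End SymmetricForms.

Section BoundedForms.
Variables (K : numFieldType) (E : normedModType K).

Lemma continuous_linear_of_ball_bounded (f : {linear E -> K^o}) (M : K) :
  (forall x, `|x| <= 1 -> `|f x| <= M) -> continuous f.
Proof.
move=> fM; apply: bounded_linear_continuous; apply/ex_bound; exists M.
apply/nbhs_normP; exists 1 => //= x.
by rewrite /ball_ /= sub0r normrN => /ltW; exact: fM.
Qed.

Lemma continuous_of_dist_le (W : normedModType K) (f : E -> W) (C : E -> K) :
  (forall x, 0 <= C x) ->
  (forall x y, `|x - y| <= 1 -> `|f x - f y| <= C x * `|x - y|) -> continuous f.
Proof.
move=> C0 fC x; apply/cvgrPdist_lt => e e0.
have C1 : 0 < C x + 1 by apply: ltr_wpDl.
near=> y.
have xy1 : `|x - y| < 1 by near: y; exact: cvgr_dist_lt.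
have xye : `|x - y| < e / (C x + 1) by near: y; apply: cvgr_dist_lt => //; exact: divr_gt0.
apply: le_lt_trans (fC x y (ltW xy1)) _.
apply: (@le_lt_trans _ _ ((C x + 1) * `|x - y|)).
  by rewrite ler_wpM2r // lerDl.
by rewrite -ltr_pdivlMl // mulrC.
Unshelve. all: by end_near.
Qed.

Lemma symmetric_form_norm_le (B : {symmetric E}) (M : K) :
  (forall x, `|x| <= 1 -> `|B x x| <= M) ->
  forall u v, `|B u v| <= 2 * M * `|u| * `|v|.
Proof.
move=> BM u v.
have [->|u0] := eqVneq u 0; first by rewrite linear0l !normr0 mulr0 mul0r.
have [->|v0] := eqVneq v 0; first by rewrite linear0r !normr0 mulr0.
pose half (w : E) : E := (2 * `|w|)^-1 *: w.
have halfK w : w != 0 -> (2 * `|w|) *: half w = w.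
  by move=> w0; rewrite scalerA divff ?scale1r // mulf_neq0 ?pnatr_eq0 ?normr_eq0.
have norm_half w : w != 0 -> `|half w| = 2^-1.
  move=> w0; rewrite normrZ normfV normrM normr_id ger0_norm ?ler0n //.
  by rewrite invfM -mulrA mulVf ?normr_eq0 // mulr1.
have unit_sum : `|half u + half v| <= 1 /\ `|half u - half v| <= 1.
  rewrite [1](splitr 1) mul1r; split.
    by apply: le_trans (ler_normD _ _) _; rewrite norm_half ?norm_half.
  by apply: le_trans (ler_normB _ _) _; rewrite norm_half ?norm_half.
have half_le : `|4 * B (half u) (half v)| <= 2 * M.
  rewrite -symmetric_form_polarization mulr2n mulrDl mul1r.
  by apply: le_trans (ler_normB _ _) _; rewrite lerD // BM //; case: unit_sum.
have -> : B u v = 4 * B (half u) (half v) * (`|u| * `|v|).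
  rewrite -{1}(halfK u u0) -{1}(halfK v v0) linearZl_LR linearZr_LR /=; ring.
rewrite normrM (normrM `|u|) !normr_id -[2 * M * _ * _]mulrA.
by rewrite ler_wpM2r ?mulr_ge0.
Qed.

Lemma continuous_symmetric_form_of_ball_bounded (B : {symmetric E}) (M : K) :
  (forall x, `|x| <= 1 -> `|B x x| <= M) -> continuous (fun x => B x x).
Proof.
move=> BM; have M0 : 0 <= M by apply: le_trans (BM 0 _); rewrite ?normr0.
apply: (@continuous_of_dist_le _ _ (fun x => 2 * M * (2 * `|x| + 1))).
  by move=> x; rewrite !mulr_ge0 ?addr_ge0.
move=> x y xy1; rewrite symmetric_form_diag_sub.
apply: (le_trans (symmetric_form_norm_le BM (x - y) (x + y))).
rewrite -mulrA [X in _ <= X]mulrAC -[X in _ <= X]mulrA.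
rewrite ler_wpM2l ?mulr_ge0 // ler_wpM2l //.
have y_le : `|y| <= `|x| + 1.
  have := ler_normD x (y - x); rewrite addrC subrK distrC => /le_trans; apply.
  by rewrite lerD2l.
apply: le_trans (ler_normD _ _) _.
by rewrite mulrDl mul1r -addrA lerD2l.
Qed.

End BoundedForms.

Section LargeValues.
Variables (K : numFieldType) (E : normedModType K).

Lemma ball_unbounded_of_not_continuous (h : E -> K^o) :
  (forall M, (forall x, `|x| <= 1 -> `|h x| <= M) -> continuous h) ->
  ~ continuous h -> forall M, 0 < M -> exists2 x, `|x| <= 1 & M < `|h x|.
Proof.
move=> hbounded hNc M M0; apply: contrapT => hM; apply/hNc/(hbounded M) => x x1.
rewrite real_leNgt ?normr_real ?gtr0_real //; apply/negP => Mhx.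
by apply: hM; exists x.
Qed.

Lemma ball_unbounded_above_of_phase (n : nat) (h : E -> K^o) :
  (forall t x, h (t *: x) = t ^+ n * h x) ->
  (forall v : K, v != 0 -> exists2 l : K, `|l| = 1 & l ^+ n * v = `|v|) ->
  (forall M, 0 < M -> exists2 x, `|x| <= 1 & M < `|h x|) ->
  forall M, 0 < M -> exists2 x, `|x| <= 1 & M <= h x.
Proof.
move=> hZ rot hunb M M0; have [x x1 Mhx] := hunb M M0.
have [|l l1 lhx] := rot (h x); first by rewrite -normr_gt0 (lt_trans M0).
by exists (l *: x); rewrite ?normrZ ?l1 ?mul1r // hZ lhx ltW.
Qed.

Lemma large_values_near0 (n : nat) (h : E -> K^o) :
  (forall t x, h (t *: x) = t ^+ n * h x) ->
  (forall M, 0 < M -> exists2 x, `|x| <= 1 & M <= h x) ->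
  forall e, 0 < e -> exists2 y, `|y| < e & 2 <= h y.
Proof.
move=> hZ hunb e e0; have e2 : 0 < e / 2 by rewrite divr_gt0.
have M0 : 0 < 2 / (e / 2) ^+ n by rewrite divr_gt0 ?exprn_gt0.
have [x x1 Mhx] := hunb _ M0; exists ((e / 2) *: x).
  rewrite normrZ gtr0_norm //; apply: le_lt_trans (_ : e / 2 < e).
    by rewrite ler_piMr ?(ltW e2).
  by rewrite ltr_pdivrMr // ltr_pMr // ltr1n.
rewrite hZ -(@ler_pdivrMl _ ((e / 2) ^+ n)) ?exprn_gt0 //.
by rewrite mulrC.
Qed.

Lemma unit_phase1 (v : K) : v != 0 -> exists2 l : K, `|l| = 1 & l ^+ 1 * v = `|v|.
Proof.
move=> v0; exists (`|v| / v); last by rewrite expr1 divfK.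
by rewrite normrM normfV normr_id divff ?normr_eq0.
Qed.

End LargeValues.

Lemma unit_phase2 (K : numClosedFieldType) (v : K) :
  v != 0 -> exists2 l : K, `|l| = 1 & l ^+ 2 * v = `|v|.
Proof.
move=> v0; exists (sqrtC (`|v| / v)); last by rewrite sqrtCK divfK.
apply/eqP; rewrite -(@sqrp_eq1 _ `|_|) // -normrX sqrtCK.
by rewrite normrM normfV normr_id divff ?normr_eq0.
Qed.

Lemma sign_ball_unbounded_above (R : realFieldType) (E : normedModType R) (h : E -> R^o) :
  (forall M, 0 < M -> exists2 x, `|x| <= 1 & M < `|h x|) ->
  exists2 s : R, `|s| = 1 & forall M, 0 < M -> exists2 x, `|x| <= 1 & M <= s * h x.
Proof.
move=> hunb.
have [hup|] := pselect (forall M, 0 < M -> exists2 x, `|x| <= 1 & M <= h x).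
  by exists 1; rewrite ?normr1 // => M /hup [x x1 Mhx]; exists x; rewrite ?mul1r.
move=> /existsNP [M1 /not_implyP [M10 hM1]]; exists (-1); first by rewrite normrN normr1.
move=> M M0; have [x x1 Mhx] := hunb (M + M1) (addr_gt0 M0 M10); exists x => //.
have : h x < M1 by rewrite ltNge; apply/negP => M1hx; apply: hM1; exists x.
rewrite mulN1r; case: (lerP 0 (h x)) => [/ger0_norm|/ltr0_norm] hx; rewrite hx in Mhx; lra.
Qed.

Section DiscontinuousForms.
Variables (R : realType) (K : numFieldType) (E : normedModType K).
Variable g : {rmorphism R -> K}.
Hypotheses (g_cont : continuous g) (g_homo : {homo g : x y / x <= y}).

Lemma image_not_connected_of_far_segments (f : E -> K^o) (z : E) : f 0 = 0 ->
  (forall e, 0 < e -> exists2 y, `|y| < e &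
     forall r, 0 <= r <= 1 -> 1 <= `|f (g r *: y + (1 - g r) *: z)|) ->
  ~ (forall C : set E, connected C -> connected (f @` C)).
Proof.
move=> f0 far fC.
pose seg (y : E) := fun r => g r *: y + (1 - g r) *: z.
pose Y := [set y | forall r, 0 <= r <= 1 -> 1 <= `|f (seg y r)|].
pose A := \bigcup_(y in Y) (seg y @` `[0, 1]).
have seg0 y : seg y 0 = z by rewrite /seg rmorph0 scale0r add0r subr0 scale1r.
have seg1 y : seg y 1 = y by rewrite /seg rmorph1 scale1r subrr scale0r addr0.
have A_connected : connected A.
  apply: bigcup_connected => [|y _].
    by exists z => y _; exists 0; rewrite ?seg0 //= in_itv /= lexx ler01.
  apply: connected_continuous_connected; first exact: segment_connected.
  apply: continuous_subspaceT => r.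
  apply: (@continuousD _ _ _ (fun r => g r *: y) (fun r => (1 - g r) *: z)).
    by apply: continuousZ; [exact: g_cont|exact: cvg_cst].
  apply: continuousZ; last exact: cvg_cst.
  by apply: cvgB; [exact: cvg_cst|exact: g_cont].
have A0 : closure A 0.
  move=> N /nbhs_ballP [e /= e0 eN]; have [y ye Yy] := far e e0.
  exists y; split; first by exists y => //; exists 1; rewrite ?seg1 //= in_itv /= lexx ler01.
  by apply: eN; rewrite -ball_normE /= sub0r normrN.
have AU0 : connected (A `|` [set 0]).
  apply: connected_subset_closure A_connected _ _ => [x Ax|x [//|-> //]]; first by left.
  exact: subset_closure.
apply: not_connected_zero_far (fC _ AU0).
- by exists 0; [right|].
- have [y _ Yy] := far 1 ltr01; exists (f y).
    by exists y => //; left; exists y => //; exists 1; rewrite ?seg1 //= in_itv /= lexx ler01.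
  have : 1 <= `|f (seg y 1)| by apply: Yy; rewrite ler01 lexx.
  by rewrite seg1; apply: contraTneq => ->; rewrite normr0 ler10.
- move=> _ [x [[y Yy [r r01 <-]]|->] <-]; last by rewrite f0 eqxx.
  by move=> _; apply: Yy; rewrite /= in_itv /= in r01.
Qed.

Lemma linear_segment_far (f : {linear E -> K^o}) y z r :
  2 <= f y -> 2 <= f z -> 0 <= r <= 1 -> 1 <= `|f (g r *: y + (1 - g r) *: z)|.
Proof.
move=> fy fz /andP[r0 r1]; rewrite linearD !linearZ /=.
have g_ge0 t : 0 <= t -> 0 <= g t by move=> /g_homo; rewrite rmorph0.
have gr0 : 0 <= g r := g_ge0 _ r0.
have gr1 : 0 <= 1 - g r by rewrite -(rmorph1 g) -rmorphB g_ge0 // subr_ge0.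
have two_le : 2 <= g r * f y + (1 - g r) * f z.
  apply: le_trans (_ : g r * 2 + (1 - g r) * 2 <= _).
    by rewrite -mulrDl addrC subrK mul1r.
  by rewrite lerD // ler_wpM2l.
rewrite ger0_norm; last exact: le_trans two_le.
by apply: le_trans two_le; rewrite ler1n.
Qed.

Lemma continuous_linear_of_image_connected (f : {linear E -> K^o}) :
  (forall C : set E, connected C -> connected (f @` C)) -> continuous f.
Proof.
move=> fC; apply: contrapT => fNc.
have fZ t x : f (t *: x) = t ^+ 1 * f x by rewrite expr1 linearZ.
have large := large_values_near0 fZ (ball_unbounded_above_of_phase fZ (@unit_phase1 K)
  (ball_unbounded_of_not_continuous (@continuous_linear_of_ball_bounded _ _ f) fNc)).
have [z _ z2] := large 1 ltr01.
apply: (image_not_connected_of_far_segments (linear0 f) (z := z)) fC => e /large[y ye y2].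
by exists y => // r; exact: linear_segment_far.
Qed.

(* [phi] plays the role of the real part: [complex.Re] over C, and [v |-> s v]
   for a sign [s] over R. *)
Variable phi : K -> R.
Hypotheses (phiD : {morph phi : x y / x + y})
  (phiZ : forall r v, phi (g r * v) = r * phi v)
  (phi_le_norm : forall v, g (phi v) <= `|v|).

Lemma symmetric_form_segment_far (B : {symmetric E}) y z r :
  2 <= phi (B y y) -> 2 <= phi (B z z) -> 0 <= phi (B y z) -> 0 <= r <= 1 ->
  1 <= `|B (g r *: y + (1 - g r) *: z) (g r *: y + (1 - g r) *: z)|.
Proof.
move=> yy zz yz /andP[r0 r1].
apply: le_trans (phi_le_norm _); rewrite -{1}(rmorph1 g); apply: g_homo.
have -> : 1 - g r = g (1 - r) by rewrite rmorphB rmorph1.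
rewrite symmetric_form_combination.
rewrite -!rmorphXn -(rmorph_nat g) -!rmorphM !phiD !phiZ.
set a := phi (B y y) in yy *; set b := phi (B y z) in yz *; set c := phi (B z z) in zz *.
have h1 : r ^+ 2 * 2 <= r ^+ 2 * a by rewrite ler_wpM2l ?sqr_ge0.
have h2 : 0 <= 2 * (r * (1 - r)) * b by rewrite !mulr_ge0 ?subr_ge0.
have h3 : (1 - r) ^+ 2 * 2 <= (1 - r) ^+ 2 * c by rewrite ler_wpM2l ?sqr_ge0.
(* 2 (r^2 + (1 - r)^2) = 1 + (2 r - 1)^2 *)
have h4 : 0 <= (2 * r - 1) ^+ 2 by rewrite sqr_ge0.
nra.
Qed.

Lemma symmetric_form_image_not_connected (B : {symmetric E}) :
  (forall e, 0 < e -> exists2 y, `|y| < e & 2 <= phi (B y y)) ->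
  ~ (forall C : set E, connected C -> connected ((fun x => B x x) @` C)).
Proof.
move=> large; have [z _ zz] := large 1 ltr01.
have phiN v : phi (- v) = - phi v by rewrite -mulN1r -(rmorphN1 g) phiZ mulN1r.
apply: (image_not_connected_of_far_segments (f := fun x => B x x) (z := z)).
  exact: linear0l.
move=> e /large[y ye yy]; have [yz|yz] := lerP 0 (phi (B y z)).
  by exists y => // r; exact: symmetric_form_segment_far.
exists (- y); first by rewrite normrN.
move=> r; apply: symmetric_form_segment_far => //; first by rewrite hnormN.
by rewrite linearNl phiN oppr_ge0 ltW.
Qed.

End DiscontinuousForms.

Section RealScalars.
Variable R : realType.

Lemma continuous_idfun : continuous (idfun : R -> R).
Proof. by move=> x. Qed.

Lemma continuous_real_symmetric_form_of_image_connected
    (E : normedModType R) (B : {symmetric E}) :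
  (forall C : set E, connected C -> connected ((fun x => B x x : R^o) @` C)) ->
  continuous (fun x => B x x : R^o).
Proof.
move=> BC; apply: contrapT => BNc.
have [s s1 large] := sign_ball_unbounded_above (ball_unbounded_of_not_continuous
  (@continuous_symmetric_form_of_ball_bounded _ _ B) BNc).
have sBZ t x : s * B (t *: x) (t *: x) = t ^+ 2 * (s * B x x).
  by rewrite symmetric_form_diagZ mulrCA.
apply: (@symmetric_form_image_not_connected _ _ _ idfun continuous_idfun
  (fun _ _ => id) ( *%R s)) BC.
- by move=> u v; rewrite /= mulrDr.
- by move=> r v; rewrite /= mulrCA.
- by move=> v; have := ler_norm (s * v); rewrite normrM s1 mul1r.
- exact: (large_values_near0 (h := fun x => s * B x x) sBZ).
Qed.

Lemma continuous_real_homogeneous_polynomial (E : normedModType R) (n : nat)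
    (P : E -> R^o) :
  (n = 1 \/ n = 2)%N -> homogeneous_polynomial n P ->
  (forall C : set E, connected C -> connected (P @` C)) -> continuous P.
Proof.
case=> -> hP.
  have [f ->] := homogeneous_polynomial1_linear hP.
  exact: continuous_linear_of_image_connected continuous_idfun (fun _ _ => id) f.
have [B /funext ->] := homogeneous_polynomial2_symmetric hP.
exact: continuous_real_symmetric_form_of_image_connected.
Qed.

End RealScalars.

Section ComplexScalars.
Variable R : realType.
Local Open Scope complex_scope.

Lemma continuous_real_complex : continuous (real_complex R : R -> R[i]^o).
Proof.
move=> x; apply/cvgrPdist_lt => -[a b]; rewrite ltcE /= => /andP[/eqP -> a0].
near=> y; rewrite -rmorphB normc_def /= expr0n addr0 sqrtr_sqr -complexr0 ltcR.
by near: y; exact: cvgr_dist_lt.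
Unshelve. all: by end_near.
Qed.

Lemma real_complex_homo : {homo real_complex R : x y / x <= y}.
Proof. by move=> x y; rewrite lecR. Qed.

Lemma Re_real_complexM (r : R) (v : R[i]) : complex.Re (r%:C * v) = r * complex.Re v.
Proof. by case: v => a b /=; rewrite mul0r subr0. Qed.

Lemma Re_le_norm (v : R[i]) : (complex.Re v)%:C <= `|v|.
Proof. by apply: le_trans (normc_ge_Re v); rewrite lecR real_ler_norm ?num_real. Qed.

Lemma continuous_complex_symmetric_form_of_image_connected
    (E : normedModType R[i]) (B : {symmetric E}) :
  (forall C : set E, connected C -> connected ((fun x => B x x : R[i]^o) @` C)) ->
  continuous (fun x => B x x : R[i]^o).
Proof.
move=> BC; apply: contrapT => BNc.
have BZ t x : B (t *: x) (t *: x) = t ^+ 2 * B x x := symmetric_form_diagZ B t x.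
have large := large_values_near0 BZ (ball_unbounded_above_of_phase BZ (@unit_phase2 _)
  (ball_unbounded_of_not_continuous (@continuous_symmetric_form_of_ball_bounded _ _ B) BNc)).
apply: (symmetric_form_image_not_connected continuous_real_complex real_complex_homo
  (@raddfD _ _ (@complex.Re R)) Re_real_complexM Re_le_norm) BC => e /large[y ye yy].
exists y => //.
by move: yy; rewrite lecE /= => /andP[_].
Qed.

Lemma continuous_complex_homogeneous_polynomial (E : normedModType R[i]) (n : nat)
    (P : E -> R[i]^o) :
  (n = 1 \/ n = 2)%N -> homogeneous_polynomial n P ->
  (forall C : set E, connected C -> connected (P @` C)) -> continuous P.
Proof.
case=> -> hP.
  have [f ->] := homogeneous_polynomial1_linear hP.
  exact: continuous_linear_of_image_connected continuous_real_complex real_complex_homo f.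
have [B /funext ->] := homogeneous_polynomial2_symmetric hP.
exact: continuous_complex_symmetric_form_of_image_connected.
Qed.

End ComplexScalars.

Theorem proposition2p2 (R : realType) :
  (forall (E : normedModType R) (n : nat) (P : E -> R^o),
      (n = 1 \/ n = 2)%N -> homogeneous_polynomial n P ->
      (continuous P <-> forall C : set E, connected C -> connected (P @` C)))
  /\
  (forall (E : normedModType R[i]) (n : nat) (P : E -> R[i]^o),
      (n = 1 \/ n = 2)%N -> homogeneous_polynomial n P ->
      (continuous P <-> forall C : set E, connected C -> connected (P @` C))).
Proof.
split=> E n P n12 hP; split; try exact: connected_image_of_continuous.
- exact: continuous_real_homogeneous_polynomial n12 hP.
- exact: continuous_complex_homogeneous_polynomial n12 hP.
Qed.
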